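(* Let $\sigma : \mathcal{S} \to \mathcal{A}$ be a strong-receptive courteous pre-$\sim$-strategy on a thin concurrent game $\mathcal{A}$; then $\mathcal{S}$ is race-preserving as well.
   Context: $e \rightarrow e'$ denotes immediate causal dependency ($e<e'$ with nothing strictly between). An essp is an event structure with polarities $A$ with a symmetry $(\tilde A,l_A,r_A)$, equivalently an isomorphism family $\mathbb{S}_A$ of bijections between configurations. An essp $\mathcal{A}$ is race-preserving if $l_A$ preserves races: whenever a configuration of $\tilde A$ (an isomorphism $\theta\in\mathbb{S}_A$) extends by a negative event and by a positive event to configurations of $\tilde A$ whose union is not a configuration of $\tilde A$, then the images under $l_A$ are likewise incompatible in $A$. A thin concurrent game (tcg) is an essp which is race-preserving and has receptive thin sub-symmetries of $\mathcal{A}^\perp$ and $\mathcal{A}$. A pre-$\sim$-strategy is a map of essps; it is courteous if $s_1 \rightarrow s_2$ with $\mathrm{pol}(s_1)=+$ or $\mathrm{pol}(s_2)=-$ implies $\sigma s_1 \rightarrow \sigma s_2$, and strong-receptive if whenever $\theta\in\mathbb{S}_S$ and $\sigma\theta$ extends in $\mathbb{S}_A$ by a pair $(a_1,a_2)$ of negative events, there is a unique extension $\theta\cup\{(s_1,s_2)\}\in\mathbb{S}_S$ with $\sigma s_i=a_i$. *)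

From Stdlib Require Import List.
Import ListNotations.
Unset Implicit Arguments.

Record ES := {
  ev :> Type;
  le : ev -> ev -> Prop;
  con : list ev -> Prop;
  le_refl : forall e, le e e;
  le_trans : forall e1 e2 e3, le e1 e2 -> le e2 e3 -> le e1 e3;
  le_antisym : forall e1 e2, le e1 e2 -> le e2 e1 -> e1 = e2;
  finite_causes : forall e, exists l, forall e', le e' e <-> In e' l;
  con_single : forall e, con [e];
  con_sub : forall l l', (forall e, In e l' -> In e l) -> con l -> con l';
  con_down : forall l e e', con l -> In e' l -> le e e' -> con (e :: l)
}.

Definition lt (E : ES) (e e' : E) : Prop := le E e e' /\ e <> e'.

Definition imm (E : ES) (e e' : E) : Prop :=
  lt E e e' /\ ~ (exists e'', lt E e e'' /\ lt E e'' e').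

Definition config (E : ES) (x : E -> Prop) : Prop :=
  (exists l, (forall e, x e <-> In e l) /\ con E l) /\
  (forall e e', x e' -> le E e e' -> x e).

Definition subset {T : Type} (x y : T -> Prop) : Prop := forall e, x e -> y e.
Definition seteq {T : Type} (x y : T -> Prop) : Prop := forall e, x e <-> y e.

Definition brel (E : ES) := E -> E -> Prop.

Definition dom {E : ES} (t : brel E) : E -> Prop := fun a => exists b, t a b.
Definition cod {E : ES} (t : brel E) : E -> Prop := fun b => exists a, t a b.

Definition cfg_bij (E : ES) (t : brel E) : Prop :=
  (forall a b b', t a b -> t a b' -> b = b') /\
  (forall a a' b, t a b -> t a' b -> a = a') /\
  config E (dom t) /\ config E (cod t).

Definition idrel {E : ES} (x : E -> Prop) : brel E := fun a b => x a /\ a = b.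
Definition invrel {E : ES} (t : brel E) : brel E := fun a b => t b a.
Definition comprel {E : ES} (t u : brel E) : brel E :=
  fun a c => exists b, t a b /\ u b c.            (* u o t *)
Definition restr {E : ES} (t : brel E) (x : E -> Prop) : brel E :=
  fun a b => t a b /\ x a.
Definition relsub {E : ES} (t u : brel E) : Prop := forall a b, t a b -> u a b.
Definition releq {E : ES} (t u : brel E) : Prop := forall a b, t a b <-> u a b.
Definition ext {E : ES} (t : brel E) (a1 a2 : E) : brel E :=
  fun a b => t a b \/ (a = a1 /\ b = a2).

Definition iso_family (E : ES) (S : brel E -> Prop) : Prop :=
  (forall t, S t -> cfg_bij E t) /\
  (forall t u, S t -> releq t u -> S u) /\
  (forall x, config E x -> S (idrel x)) /\
  (forall t, S t -> S (invrel t)) /\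
  (forall t u, S t -> S u -> seteq (cod t) (dom u) -> S (comprel t u)) /\
  (forall t x, S t -> config E x -> subset x (dom t) -> S (restr t x)) /\
  (forall t x', S t -> config E x' -> subset (dom t) x' ->
     exists t', S t' /\ relsub t t' /\ seteq (dom t') x').

Record essp := {
  es :> ES;
  pol : es -> bool;                 (* true = positive (+), false = negative (-) *)
  sym : brel es -> Prop;
  sym_iso : iso_family es sym;
  sym_pol : forall t a b, sym t -> t a b -> pol a = pol b
}.

(* Race-preservation: configurations of the symmetry event structure ~A are
   the elements of S_A, l_A sends theta to its domain. *)
Definition race_preserving (A : essp) : Prop :=
  forall (t : brel A) (a1 a2 b1 b2 : A),
    sym A t ->
    ~ dom t a1 -> pol A a1 = false -> sym A (ext t a1 a2) ->
    ~ dom t b1 -> pol A b1 = true  -> sym A (ext t b1 b2) ->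
    ~ sym A (fun a b => t a b \/ (a = a1 /\ b = a2) \/ (a = b1 /\ b = b2)) ->
    ~ config A (fun e => dom t e \/ e = a1 \/ e = b1).

(* A receptive thin sub-symmetry of the essp whose underlying event
   structure and symmetry are those of A, with polarity p
   (p = pol A for A, p = negb o pol A for A^perp). *)
Definition receptive_thin_subsym (A : essp) (p : A -> bool)
    (S' : brel A -> Prop) : Prop :=
  iso_family A S' /\
  (forall t, S' t -> sym A t) /\
  (forall t a1 a2, S' t -> ~ dom t a1 -> p a1 = false ->
     sym A (ext t a1 a2) -> S' (ext t a1 a2)) /\
  (forall x a1 a2, config A x -> ~ x a1 -> p a1 = true ->
     S' (ext (idrel x) a1 a2) -> a1 = a2).

Definition tcg (A : essp) : Prop :=
  race_preserving A /\
  (exists Sm Sp : brel A -> Prop,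
     receptive_thin_subsym A (fun a => negb (pol A a)) Sm /\
     receptive_thin_subsym A (pol A) Sp).

Definition image {S A : ES} (f : S -> A) (x : S -> Prop) : A -> Prop :=
  fun a => exists s, x s /\ f s = a.

Definition maprel {S A : ES} (f : S -> A) (t : brel S) : brel A :=
  fun a b => exists s s', t s s' /\ f s = a /\ f s' = b.

Definition essp_map (S A : essp) (f : S -> A) : Prop :=
  (forall s, pol A (f s) = pol S s) /\
  (forall x, config S x -> config A (image f x)) /\
  (forall x s s', config S x -> x s -> x s' -> f s = f s' -> s = s') /\
  (forall t, sym S t -> sym A (maprel f t)).

Definition courteous (S A : essp) (f : S -> A) : Prop :=
  forall s1 s2, imm S s1 s2 -> (pol S s1 = true \/ pol S s2 = false) ->
    imm A (f s1) (f s2).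

Definition strong_receptive (S A : essp) (f : S -> A) : Prop :=
  forall (t : brel S) (a1 a2 : A),
    sym S t -> ~ dom (maprel f t) a1 -> pol A a1 = false ->
    sym A (ext (maprel f t) a1 a2) ->
    (exists s1 s2, sym S (ext t s1 s2) /\ f s1 = a1 /\ f s2 = a2) /\
    (forall s1 s2 s1' s2',
       sym S (ext t s1 s2) -> f s1 = a1 -> f s2 = a2 ->
       sym S (ext t s1' s2') -> f s1' = a1 -> f s2' = a2 ->
       s1 = s1' /\ s2 = s2').

(* Suppose a race of S (a negative extension by a1 and a positive one by b1 of some
   theta in S_S) were resolved in the configurations of S but not in S_S.  Its image
   under sigma is a race of A on a configuration, so by race preservation of A the two
   image extensions are jointly in S_A.  Strong receptivity lifts the negative image
   extension on top of theta + (b1, b2), producing a negative event s1 over sigma a1.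
   Courtesy forces the immediate causes of s1 to map to immediate causes of sigma a1,
   so none of them is b1 and s1 may be detached from b1.  Uniqueness in strong
   receptivity then identifies s1 with a1, so the union was in S_S after all. *)
From Stdlib Require Import List Classical ClassicalEpsilon Wf_nat.

Lemma sym_cfg_bij (E : essp) t : sym E t -> cfg_bij E t.
Proof. destruct (sym_iso E) as [H _]. auto. Qed.

Lemma sym_releq (E : essp) t u : sym E t -> releq t u -> sym E u.
Proof. destruct (sym_iso E) as [_ [H _]]. eauto. Qed.

Lemma sym_restr (E : essp) t x :
  sym E t -> config E x -> subset x (dom t) -> sym E (restr t x).
Proof. destruct (sym_iso E) as [_ [_ [_ [_ [_ [H _]]]]]]. auto. Qed.

Lemma sym_config_dom (E : essp) t : sym E t -> config E (dom t).
Proof. intros Ht. apply (sym_cfg_bij E t Ht). Qed.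

Lemma config_seteq (E : ES) x y : config E x -> seteq x y -> config E y.
Proof.
  intros [[l [Hl Hcon]] Hdown] Hxy. split.
  - exists l. split; [intro e; rewrite <- (Hxy e); apply Hl | exact Hcon].
  - intros e e' He' Hle. apply Hxy. apply (Hdown e e'); [apply Hxy|]; auto.
Qed.

Lemma dom_ext {E : ES} (t : brel E) a b e : dom (ext t a b) e <-> dom t e \/ e = a.
Proof.
  split.
  - intros [v [Hv | [-> _]]]; [left; exists v|right]; auto.
  - intros [[v Hv] | ->]; [exists v; left | exists b; right]; auto.
Qed.

Lemma maprel_ext {S A : ES} (f : S -> A) t a b :
  releq (maprel f (ext t a b)) (ext (maprel f t) (f a) (f b)).
Proof.
  intros u v. split.
  - intros [s [s' [[H | [-> ->]] [<- <-]]]]; [left; exists s, s' | right]; auto.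
  - intros [[s [s' [H [<- <-]]]] | [-> ->]]; [exists s, s' | exists a, b]; unfold ext; auto.
Qed.

Lemma image_dom_maprel {S A : ES} (f : S -> A) t :
  seteq (image f (dom t)) (dom (maprel f t)).
Proof.
  intro a. split.
  - intros [s [[s' Hs] <-]]. exists (f s'), s, s'. auto.
  - intros [b [s [s' [Hs [<- _]]]]]. exists s. split; [exists s'|]; auto.
Qed.

(* Finiteness of causes gives [<] immediate steps: induct on the length of a list
   covering the events strictly between [c] and [s]. *)
Lemma imm_above_cause (E : ES) c s : lt E c s -> exists e, le E c e /\ imm E e s.
Proof.
  intros Hcs. destruct (finite_causes E s) as [l Hl].
  assert (Hbetween : forall e, lt E c e -> lt E e s -> In e l)
    by (intros e _ [Hes _]; apply Hl, Hes).
  clear Hl. revert c Hcs Hbetween.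
  induction l as [l IH] using (induction_ltof1 _ (@length _)).
  intros c Hcs Hbetween.
  destruct (classic (exists d, lt E c d /\ lt E d s)) as [[d [Hcd Hds]] | Hnone].
  - set (eq_dec := fun x y : E => excluded_middle_informative (x = y)).
    destruct (IH (remove eq_dec d l) (remove_length_lt eq_dec l d (Hbetween d Hcd Hds))
                d Hds) as [e [Hde Hes]].
    + intros e [Hde Hne] Hes. apply in_in_remove; [congruence|].
      apply Hbetween; [|exact Hes]. split.
      * apply (le_trans E _ d); [apply Hcd | exact Hde].
      * intros <-. apply (proj2 Hcd), le_antisym; [apply Hcd | exact Hde].
    + exists e. split; [apply (le_trans E _ d); [apply Hcd|]|]; assumption.
  - exists c. split; [apply le_refl | split; assumption].
Qed.

Lemma config_add_event (E : ES) x y s :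
  config E x -> config E y -> subset x y -> y s ->
  (forall c, lt E c s -> x c) -> config E (fun e => x e \/ e = s).
Proof.
  intros [[l [Hl _]] Hxdown] [[m [Hm Hcon]] _] Hxy Hys Hcauses. split.
  - exists (s :: l). split.
    + intro e. simpl. rewrite Hl. split; intros [H | H]; auto.
    + apply (con_sub E m); [|exact Hcon].
      intros e [<- | He]; apply Hm; [|apply Hxy, Hl]; assumption.
  - intros e e' [He' | ->] Hle; [left; apply (Hxdown e e'); assumption|].
    destruct (classic (e = s)) as [-> | Hne]; [right | left; apply Hcauses]; auto.
    split; assumption.
Qed.

Lemma sym_ext_forget (E : essp) t a b c d :
  sym E (ext (ext t b c) a d) -> ~ dom t b -> a <> b ->
  config E (fun e => dom t e \/ e = a) -> sym E (ext t a d).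
Proof.
  intros Hsym Hb Hab Hconf.
  assert (Hcovered : subset (fun e => dom t e \/ e = a) (dom (ext (ext t b c) a d))).
  { intros e [He | ->]; apply dom_ext; [left; apply dom_ext|]; auto. }
  apply (sym_releq E _ _ (sym_restr E _ _ Hsym Hconf Hcovered)).
  intros u v. unfold restr, ext. split.
  - intros [[[H | [-> _]] | H] Hu]; auto. exfalso. destruct Hu; auto.
  - intros [H | [-> ->]]; split; auto. left. exists v. exact H.
Qed.

Section RacePreservation.

Variables (A S : essp) (sigma : S -> A).
Hypothesis A_race_preserving : race_preserving A.
Hypothesis sigma_map : essp_map S A sigma.
Hypothesis sigma_courteous : courteous S A sigma.
Hypothesis sigma_receptive : strong_receptive S A sigma.

Lemma sigma_pol s : pol A (sigma s) = pol S s.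
Proof. apply sigma_map. Qed.

Lemma sigma_config x : config S x -> config A (image sigma x).
Proof. apply sigma_map. Qed.

Lemma sigma_sym t : sym S t -> sym A (maprel sigma t).
Proof. apply sigma_map. Qed.

Lemma sigma_locally_injective x s s' :
  config S x -> x s -> x s' -> sigma s = sigma s' -> s = s'.
Proof. apply sigma_map. Qed.

Lemma maprel_not_dom x t s :
  config S x -> subset (dom t) x -> x s -> ~ dom t s -> ~ dom (maprel sigma t) (sigma s).
Proof.
  intros Hx Htx Hs Hns Hdom. apply image_dom_maprel in Hdom.
  destruct Hdom as [s' [Hs' Heq]]. apply Hns.
  rewrite <- (sigma_locally_injective x s' s); auto.
Qed.

Section Race.

Variables (t : brel S) (a1 a2 b1 b2 : S).
Hypothesis sym_t : sym S t.
Hypothesis a1_fresh : ~ dom t a1.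
Hypothesis a1_neg : pol S a1 = false.
Hypothesis sym_ta : sym S (ext t a1 a2).
Hypothesis b1_fresh : ~ dom t b1.
Hypothesis b1_pos : pol S b1 = true.
Hypothesis sym_tb : sym S (ext t b1 b2).
Hypothesis race_config : config S (fun e => dom t e \/ e = a1 \/ e = b1).

Let x := fun e => dom t e \/ e = a1 \/ e = b1.
Let T := maprel sigma t.

Lemma a1_neq_b1 : a1 <> b1.
Proof. intros <-. congruence. Qed.

Lemma dom_t_race : subset (dom t) x.
Proof. intros e He. left. exact He. Qed.

Lemma sigma_race_injective s s' : x s -> x s' -> sigma s = sigma s' -> s = s'.
Proof. apply sigma_locally_injective, race_config. Qed.

Lemma sigma_a1_fresh : ~ dom T (sigma a1).
Proof. apply (maprel_not_dom x); [exact race_config | exact dom_t_race | unfold x; auto | auto]. Qed.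

Lemma sigma_b1_fresh : ~ dom T (sigma b1).
Proof. apply (maprel_not_dom x); [exact race_config | exact dom_t_race | unfold x; auto | auto]. Qed.

Lemma sym_sigma_ext a b : sym S (ext t a b) -> sym A (ext T (sigma a) (sigma b)).
Proof. intros H. apply (sym_releq A _ _ (sigma_sym _ H)), maprel_ext. Qed.

Lemma sym_sigma_union :
  sym A (ext (ext T (sigma b1) (sigma b2)) (sigma a1) (sigma a2)).
Proof.
  apply NNPP. intro Hnot.
  apply (A_race_preserving T (sigma a1) (sigma a2) (sigma b1) (sigma b2)); auto.
  - apply sigma_sym, sym_t.
  - exact sigma_a1_fresh.
  - rewrite sigma_pol. exact a1_neg.
  - apply sym_sigma_ext, sym_ta.
  - exact sigma_b1_fresh.
  - rewrite sigma_pol. exact b1_pos.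
  - apply sym_sigma_ext, sym_tb.
  - intro H. apply Hnot. apply (sym_releq A _ _ H). intros u v. unfold ext. tauto.
  - apply (config_seteq _ _ _ (sigma_config x race_config)). intro a.
    unfold T. rewrite <- (image_dom_maprel sigma t a). unfold image, x. split.
    + intros [s [[Hs | [-> | ->]] <-]]; eauto.
    + intros [[s [Hs <-]] | [-> | ->]]; eauto.
Qed.

Lemma sigma_b1_not_below_a1 : ~ le A (sigma b1) (sigma a1).
Proof.
  intro Hle.
  assert (Hconf := sigma_config _ (sym_config_dom S _ sym_ta)).
  destruct (proj2 Hconf (sigma b1) (sigma a1)) as [e [He Heq]]; [|exact Hle|].
  { exists a1. split; [apply dom_ext; right|]; auto. }
  apply dom_ext in He.
  assert (e = b1) as -> by (apply sigma_race_injective; unfold x; tauto).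
  destruct He as [He | He]; [exact (b1_fresh He) | exact (a1_neq_b1 (eq_sym He))].
Qed.

Section Lift.

Variables s1 s2 : S.
Hypothesis sym_lift : sym S (ext (ext t b1 b2) s1 s2).
Hypothesis s1_over_a1 : sigma s1 = sigma a1.

Lemma s1_neg : pol S s1 = false.
Proof. rewrite <- sigma_pol, s1_over_a1, sigma_pol. exact a1_neg. Qed.

Lemma s1_neq_b1 : s1 <> b1.
Proof. intro Heq. pose proof s1_neg as Hneg. rewrite Heq in Hneg. congruence. Qed.

Lemma causes_s1_in_dom_t c : lt S c s1 -> dom t c.
Proof.
  intros Hc. destruct (imm_above_cause S c s1 Hc) as [e [Hce Hes]].
  apply (proj2 (sym_config_dom S _ sym_t) c e); [|exact Hce].
  assert (He : dom (ext (ext t b1 b2) s1 s2) e).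
  { apply (proj2 (sym_config_dom S _ sym_lift) e s1); [|apply Hes].
    apply dom_ext. auto. }
  rewrite !dom_ext in He. destruct He as [[He | ->] | ->]; [exact He | | ].
  - exfalso. apply sigma_b1_not_below_a1. rewrite <- s1_over_a1.
    apply (sigma_courteous b1 s1 Hes). auto.
  - exfalso. apply (proj2 (proj1 Hes)). reflexivity.
Qed.

Lemma sym_t_s1 : sym S (ext t s1 s2).
Proof.
  apply (sym_ext_forget S t s1 b1 b2 s2 sym_lift b1_fresh s1_neq_b1).
  apply (config_add_event S _ _ _ (sym_config_dom S _ sym_t) (sym_config_dom S _ sym_lift)).
  - intros e He. apply dom_ext. left. apply dom_ext. auto.
  - apply dom_ext. auto.
  - exact causes_s1_in_dom_t.
Qed.

End Lift.

Lemma race_union_sym :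
  sym S (fun a b => t a b \/ (a = a1 /\ b = a2) \/ (a = b1 /\ b = b2)).
Proof.
  assert (Ha1 : ~ dom (maprel sigma (ext t b1 b2)) (sigma a1)).
  { intros [b H]. apply maprel_ext in H.
    destruct H as [H | [H _]]; [exact (sigma_a1_fresh (ex_intro _ b H))|].
    apply a1_neq_b1, sigma_race_injective; unfold x; auto. }
  destruct (sigma_receptive (ext t b1 b2) (sigma a1) (sigma a2) sym_tb Ha1)
    as [[s1 [s2 [Hlift [Hs1 Hs2]]]] _].
  - rewrite sigma_pol. exact a1_neg.
  - apply (sym_releq A _ _ sym_sigma_union). intros u v.
    pose proof (maprel_ext sigma t b1 b2 u v). unfold T, ext in *. tauto.
  - destruct (proj2 (sigma_receptive t (sigma a1) (sigma a2) sym_t sigma_a1_fresh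
                       (eq_trans (sigma_pol a1) a1_neg) (sym_sigma_ext _ _ sym_ta)))
      with a1 a2 s1 s2 as [<- <-]; auto.
    + apply sym_t_s1; assumption.
    + apply (sym_releq S _ _ Hlift). intros u v. unfold ext. tauto.
Qed.

End Race.

End RacePreservation.

Theorem mainTheorem9 (A S : essp) (sigma : S -> A) :
  tcg A ->
  essp_map S A sigma ->
  courteous S A sigma ->
  strong_receptive S A sigma ->
  race_preserving S.
Proof.
  intros [HA _] Hmap Hcour Hsr t a1 a2 b1 b2 Ht Ha1 Hpa Hta Hb1 Hpb Htb Hnot Hx.
  exact (Hnot (race_union_sym A S sigma HA Hmap Hcour Hsr t a1 a2 b1 b2
                 Ht Ha1 Hpa Hta Hb1 Hpb Htb Hx)).
Qed.
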